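(* Let $f$ be a Moufang permutation on an abelian group $(X,+)$ with associated biadditive mapping $\beta$. Then for every integer $i$ and all $x,y\in X$, $$f^{-i}\big(f^i(x)+f^i(y)\big)=x+y+\sum_{k\in I(0,i)}f^{-3k}(\beta(x,y)).$$
   Context: A permutation $f$ of an abelian group $(X,+)$ is a Moufang permutation if the map $\beta(x,y)=f^{-1}(f(x)+f(y))-x-y$ (P1) is symmetric, alternating ($\beta(x,x)=0$) and biadditive, and for all $x,y,z\in X$: (P2) $\beta(\beta(x,y),z)=0$ and (P3) $\beta(f(x),f(y))=f(\beta(f^3(x),y))$; $\beta$ is the associated biadditive mapping. For integers $i,j$, $I(i,j)$ is $\emptyset$ if $i=j$, $\{i,\dots,j-1\}$ if $i<j$, $\{j,\dots,i-1\}$ if $j<i$. *)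

From mathcomp Require Import all_boot all_order all_algebra.
Set Implicit Arguments. Unset Strict Implicit. Unset Printing Implicit Defensive.
Import Order.TTheory GRing.Theory Num.Theory.
Local Open Scope ring_scope.

Section Moufang.
Variable X : zmodType.

Definition is_perm_pair (f finv : X -> X) : Prop := cancel f finv /\ cancel finv f.

(* Integer powers of the permutation f (with inverse finv):
   f^n for n >= 0, and f^{-(n+1)} = finv^(n+1). *)
Definition fpowz (f finv : X -> X) (i : int) : X -> X :=
  match i with
  | Posz n => iter n f
  | Negz n => iter n.+1 finv
  end.

Definition mbeta (f finv : X -> X) (x y : X) : X := finv (f x + f y) - x - y.

Definition Moufang_perm (f finv : X -> X) : Prop :=
  is_perm_pair f finv /\
  (forall x y, mbeta f finv x y = mbeta f finv y x) /\
  (forall x, mbeta f finv x x = 0) /\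
  (forall x x' y, mbeta f finv (x + x') y = mbeta f finv x y + mbeta f finv x' y) /\
  (forall x y y', mbeta f finv x (y + y') = mbeta f finv x y + mbeta f finv x y') /\
  (forall x y z, mbeta f finv (mbeta f finv x y) z = 0) /\
  (forall x y, mbeta f finv (f x) (f y) = f (mbeta f finv (iter 3 f x) y)).
End Moufang.

(* I(i,j): empty if i = j, {i,...,j-1} if i < j, {j,...,i-1} if j < i. *)
Definition Iint (i j : int) : seq int :=
  [seq (Num.min i j) + (k%:Z) | k <- iota 0 `|i - j|%N].

(** By (P2) every value [c] of [beta]
    satisfies [beta(c,z) = 0], so (P1) read at [(c,z)] says that [f] and
    [f^-1] are additive on translates by such [c].  Using (P3) twice,
    [beta(f x, f y) = f^-2 (beta(x,y))].  Hence, writing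
    [f^-(n+1)(f^(n+1) x + f^(n+1) y) = f^-n (f^n x + f^n y + beta(f^n x, f^n y))],
    the extra term splits off additively as [f^-n f^-2n beta(x,y) = f^-3n beta(x,y)],
    and induction gives the formula for [i >= 0]; the case [i < 0] is symmetric,
    the values of [beta] having order 2. *)
From mathcomp Require Import all_boot all_order all_algebra.
From mathcomp Require Import zify.
Import Order.TTheory GRing.Theory Num.Theory.
Local Open Scope ring_scope.

Section MoufangPermutation.
Variable X : zmodType.
Variables f finv : X -> X.
Hypothesis fK : cancel f finv.
Hypothesis finvK : cancel finv f.
Local Notation beta := (mbeta f finv).
Hypothesis beta_sym : forall x y, beta x y = beta y x.
Hypothesis beta_alt : forall x, beta x x = 0.
Hypothesis beta_addl : forall x x' y, beta (x + x') y = beta x y + beta x' y.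
Hypothesis beta_addr : forall x y y', beta x (y + y') = beta x y + beta x y'.
Hypothesis beta_beta : forall x y z, beta (beta x y) z = 0.
Hypothesis beta_f : forall x y, beta (f x) (f y) = f (beta (iter 3 f x) y).

Lemma finv_add_f x y : finv (f x + f y) = x + y + beta x y.
Proof. by rewrite /mbeta -[finv _ - x - y]addrA -opprD [RHS]addrC subrK. Qed.

Lemma mbeta_double x y : beta x y + beta x y = 0.
Proof.
have := beta_alt (x + y).
by rewrite beta_addl !beta_addr !beta_alt add0r addr0 (beta_sym y x).
Qed.

Definition beta_value (c : X) : Prop := exists a a', c = beta a a'.

Lemma beta_valueP x y : beta_value (beta x y).
Proof. by exists x, y. Qed.

Lemma f_add_of_mbeta0 c z : beta c z = 0 -> f (c + z) = f c + f z.
Proof. by move=> c0; rewrite -[c + z]addr0 -c0 -finv_add_f finvK. Qed.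

Lemma f_mbeta a a' : f (beta a a') = beta (finv (finv a)) (f a').
Proof. by have := beta_f (finv (finv (finv a))) a'; rewrite /= !finvK => <-. Qed.

Lemma finv_mbeta a a' : finv (beta a a') = beta (f (f a)) (finv a').
Proof. by apply: (can_inj fK); rewrite f_mbeta !finvK !fK. Qed.

Lemma mbeta_finv a a' : beta (finv a) (finv a') = f (f (beta a a')).
Proof. by rewrite f_mbeta [in RHS]beta_sym f_mbeta finvK fK beta_sym. Qed.

Lemma mbeta_ff a a' : beta (f a) (f a') = finv (finv (beta a a')).
Proof.
by apply: (can_inj fK); apply: (can_inj fK); rewrite !finvK -mbeta_finv !fK.
Qed.

Lemma f_beta_value c : beta_value c -> beta_value (f c).
Proof. by case=> a [a' ->]; rewrite f_mbeta; apply: beta_valueP. Qed.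

Lemma finv_beta_value c : beta_value c -> beta_value (finv c).
Proof. by case=> a [a' ->]; rewrite finv_mbeta; apply: beta_valueP. Qed.

Lemma f_add_beta_value c z : beta_value c -> f (c + z) = f c + f z.
Proof. by case=> a [a' ->]; apply/f_add_of_mbeta0/beta_beta. Qed.

Lemma finv_add_beta_value c z : beta_value c -> finv (c + z) = finv c + finv z.
Proof.
move=> c_val; apply: (can_inj fK).
by rewrite finvK f_add_beta_value ?finvK //; apply: finv_beta_value.
Qed.

Lemma iter_f_add_beta_value n c z :
  beta_value c -> iter n f (c + z) = iter n f c + iter n f z.
Proof.
move=> c_val; elim: n => //= n ->; apply: f_add_beta_value.
by elim: n => //= n; apply: f_beta_value.
Qed.

Lemma iter_finv_add_beta_value n c z :
  beta_value c -> iter n finv (c + z) = iter n finv c + iter n finv z.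
Proof.
move=> c_val; elim: n => //= n ->; apply: finv_add_beta_value.
by elim: n => //= n; apply: finv_beta_value.
Qed.

Lemma mbeta_iter_f n x y :
  beta (iter n f x) (iter n f y) = iter (n + n) finv (beta x y).
Proof. by elim: n => //= n IH; rewrite mbeta_ff IH addnS. Qed.

Lemma mbeta_iter_finv n x y :
  beta (iter n finv x) (iter n finv y) = iter (n + n) f (beta x y).
Proof. by elim: n => //= n IH; rewrite mbeta_finv IH addnS. Qed.

Lemma mul3n n : (3 * n = n + (n + n))%N.
Proof. by rewrite !mulSn mul0n addn0. Qed.

Lemma iter_finv_add_iter_f n x y :
  iter n finv (iter n f x + iter n f y)
  = x + y + \sum_(0 <= k < n) iter (3 * k) finv (beta x y).
Proof.
elim: n => [|n IH]; first by rewrite big_geq // addr0.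
rewrite big_nat_recr // [iter n.+1 finv _]iterSr /= finv_add_f.
rewrite (addrC (_ + _) (beta _ _)).
rewrite iter_finv_add_beta_value; last exact: beta_valueP.
rewrite IH mbeta_iter_f -iterD -mul3n.
by rewrite [LHS]addrC -!addrA.
Qed.

Lemma add_finv u v : finv u + finv v = beta (finv u) (finv v) + finv (u + v).
Proof.
have := finv_add_f (finv u) (finv v); rewrite !finvK => ->.
by rewrite [RHS]addrC -addrA mbeta_double addr0.
Qed.

Lemma iter_f_add_iter_finv n x y :
  iter n f (iter n finv x + iter n finv y)
  = x + y + \sum_(0 <= k < n) iter (3 * k.+1) f (beta x y).
Proof.
elim: n => [|n IH]; first by rewrite big_geq // addr0.
rewrite big_nat_recr // [iter n.+1 f _]iterSr !iterS add_finv.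
rewrite f_add_beta_value ?finvK; last exact: beta_valueP.
rewrite iter_f_add_beta_value; last exact/f_beta_value/beta_valueP.
rewrite IH -iterSr -!iterS mbeta_iter_finv -iterD -mul3n.
by rewrite addrC -!addrA.
Qed.

End MoufangPermutation.

Lemma fpowz_Posz (X : zmodType) (f finv : X -> X) (n : nat) :
  fpowz f finv n%:Z = iter n f.
Proof. by []. Qed.

Lemma fpowz_Negz (X : zmodType) (f finv : X -> X) (m : nat) :
  fpowz f finv (Negz m) = iter m.+1 finv.
Proof. by []. Qed.

Lemma fpowz_oppPosz (X : zmodType) (f finv : X -> X) (n : nat) :
  fpowz f finv (- n%:Z) = iter n finv.
Proof. by case: n. Qed.

Lemma Iint0_Posz (n : nat) : Iint 0 n%:Z = [seq k%:Z | k <- iota 0 n].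
Proof.
rewrite /Iint min_l // sub0r abszN absz_nat.
by apply: eq_map => k; rewrite add0r.
Qed.

Lemma Iint0_Negz (m : nat) : Iint 0 (Negz m) = [seq Negz m + k%:Z | k <- iota 0 m.+1].
Proof. by rewrite /Iint min_r. Qed.

Theorem mainTheorem12 (X : zmodType) (f finv : X -> X) :
  Moufang_perm f finv ->
  forall (i : int) (x y : X),
    fpowz f finv (- i) (fpowz f finv i x + fpowz f finv i y)
    = x + y + \sum_(k <- Iint 0 i) fpowz f finv (- (3 * k)) (mbeta f finv x y).
Proof.
case=> [[fK finvK] [sym [alt [addl [addr [bb bf]]]]]] [n|m] x y.
- rewrite fpowz_oppPosz fpowz_Posz iter_finv_add_iter_f // Iint0_Posz big_map.
  rewrite /index_iota subn0.
  by congr (_ + _); apply: eq_bigr => k _; rewrite -PoszM fpowz_oppPosz.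
- rewrite (_ : - Negz m = m.+1%:Z) // fpowz_Posz fpowz_Negz.
  rewrite iter_f_add_iter_finv // Iint0_Negz big_map big_nat_rev.
  congr (_ + _); apply: eq_big_nat => k /andP[_ lt_k].
  by rewrite (_ : - (3 * (Negz m + k%:Z)) = (3 * (0 + m.+1 - k.+1).+1)%N%:Z) //; lia.
Qed.
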